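(* For $\tau$ in the upper half-plane, $$\frac{2}{\mathfrak{p}(8\tau)}=\frac{1-v^2(\tau)}{v(\tau)}=\frac{1}{v(\tau)}-v(\tau).$$
   Context: $q=e^{2\pi i\tau}$ and $q^r:=e^{2\pi i r\tau}$ for rational $r$. $v(\tau)=q^{1/2}\prod_{n\ge1}(1-q^n)^{\left(\frac{8}{n}\right)}$ with $\left(\frac{8}{n}\right)$ the Kronecker symbol, and $\mathfrak{p}(\tau)=2q^{1/16}\prod_{n\ge1}\left(\frac{1+q^{n/2}}{1+q^{n/2-1/4}}\right)^2$ (equivalently $\mathfrak{f}_2(\tau/2)^2/\mathfrak{f}(\tau/2)^2$ in terms of the Weber–Schläfli functions). *)

From Stdlib Require Import Reals ZArith.
From Coquelicot Require Export Coquelicot.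
Open Scope R_scope.

Definition cexp (z : C) : C :=
  (exp (Re z) * cos (Im z), exp (Re z) * sin (Im z)).

Definition qpow (r : R) (tau : C) : C :=
  cexp (RtoC (2 * PI * r) * Ci * tau)%C.

(* Kronecker symbol (8/n) for n >= 1: 0 if n even, 1 if n = +-1 mod 8,
   -1 if n = +-3 mod 8. *)
Definition kron8 (n : nat) : Z :=
  match (n mod 8)%nat with
  | 1%nat | 7%nat => 1%Z
  | 3%nat | 5%nat => (-1)%Z
  | _ => 0%Z
  end.

Definition zpowC (x : C) (k : Z) : C :=
  match k with
  | Z0 => 1%C
  | Zpos p => Cpow x (Pos.to_nat p)
  | Zneg p => Cinv (Cpow x (Pos.to_nat p))
  end.

Fixpoint cprod (f : nat -> C) (N : nat) : C :=
  match N with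
  | O => 1%C
  | S m => (cprod f m * f (S m))%C
  end.

Definition v_partial (tau : C) (N : nat) : C :=
  (qpow (1/2) tau *
   cprod (fun n => zpowC (1 - qpow (INR n) tau)%C (kron8 n)) N)%C.

Definition p_partial (tau : C) (N : nat) : C :=
  (RtoC 2 * qpow (1/16) tau *
   cprod (fun n => Cpow ((1 + qpow (INR n / 2) tau) /
                         (1 + qpow (INR n / 2 - 1/4) tau)) 2)%C N)%C.

From Stdlib Require Import Reals Lra Lia.
From Coquelicot Require Import Coquelicot.

(* Write x = q^(1/2) = e^(pi i tau) and J(Q, z) = prod_(n>=1) (1 - Q^(2n)) (1 + z Q^(2n-1))
   (1 + Q^(2n-1) / z) = sum_n Q^(n^2) z^n (Jacobi's triple product).  Grouping the factors of v
   in blocks of eight gives v = x J_A / J_B with J_A = J(x^8, -x^6) and J_B = J(x^8, -x^2), while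
   p(8 tau) = 2 x (P_8 / P_4)^2 with P_a = prod_(n>=0) (1 + x^(8n+a)).  The claim thus becomes
   P_8^2 (J_B + x J_A) (J_B - x J_A) = P_4^2 J_A J_B.  Splitting the series of J(i x^2, i x)
   according to the parity of n gives J(i x^2, i x) = J_B + x J_A, and J(i x^2, -i x) = J_B - x J_A
   likewise; on the product side, pairing the factors of J(i x^2, i x) J(i x^2, -i x) two by two
   gives P_4^2 J_A J_B / P_8^2.  The triple product itself follows from Cauchy's q-binomial
   theorem, evaluated at z q^(1-2n), by Tannery's theorem. *)

Open Scope R_scope.
Local Open Scope C_scope.

Local Notation "u --> l" := (filterlim u eventually (locally (l : C))) (at level 70).

Lemma Copp_nz (a : C) : a <> 0 -> - a <> 0.
Proof. intros Ha E. apply Ha. replace a with (- - a) by ring. rewrite E. ring. Qed.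

Lemma Cdiv_nz (a b : C) : a <> 0 -> b <> 0 -> a / b <> 0.
Proof.
  intros Ha Hb E. apply Ha. replace a with (a / b * b) by (field; exact Hb). rewrite E. ring.
Qed.

Lemma Cpow_div (a b : C) n : b <> 0 -> (a / b) ^ n = a ^ n / b ^ n.
Proof. intros Hb. unfold Cdiv. rewrite Cpow_mult_l, Cpow_inv; auto. Qed.

Lemma pow_le_1 (r : R) (n : nat) : (0 <= r <= 1)%R -> (r ^ n <= 1)%R.
Proof. intros Hr. rewrite <- (pow1 n). apply pow_incr. lra. Qed.

Lemma pow_le_pow_decr (r : R) (n m : nat) : (0 <= r <= 1)%R -> (n <= m)%nat -> (r ^ m <= r ^ n)%R.
Proof.
  intros Hr Hnm. replace m with (n + (m - n))%nat by lia. rewrite pow_add.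
  pose proof (pow_le r n (proj1 Hr)). pose proof (pow_le_1 r (m - n) Hr). nra.
Qed.

Lemma Cmod_one_plus_ge (c : C) : (1 - Cmod c <= Cmod (1 + c))%R.
Proof.
  pose proof (Cmod_triangle (1 + c) (- c)) as T. replace (1 + c + - c) with (RtoC 1) in T by ring.
  rewrite Cmod_1, Cmod_opp in T. lra.
Qed.

Lemma Cmod_one_minus_ge (c : C) : (1 - Cmod c <= Cmod (1 - c))%R.
Proof. pose proof (Cmod_one_plus_ge (- c)) as H. rewrite Cmod_opp in H. exact H. Qed.

Lemma Cmod_pow_S_lt_1 (y : C) n : (Cmod y < 1)%R -> (Cmod (y ^ S n) < 1)%R.
Proof.
  intros Hy. rewrite Cmod_pow. simpl. pose proof (Cmod_ge_0 y).
  pose proof (pow_le_1 (Cmod y) n ltac:(lra)). nra.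
Qed.

Lemma one_minus_pow_nz (y : C) n : (Cmod y < 1)%R -> 1 - y ^ S n <> 0.
Proof.
  intros Hy E. pose proof (Cmod_pow_S_lt_1 y n Hy) as Hlt.
  replace (y ^ S n) with (RtoC 1) in Hlt by (rewrite <- (Cplus_0_r (y ^ S n)), <- E; ring).
  rewrite Cmod_1 in Hlt. lra.
Qed.

(** * Finite sums and products *)

(* [sumC f n] and [prodC f n] run over the [n] indices [0 .. n-1]. *)
Fixpoint sumC (f : nat -> C) (n : nat) : C :=
  match n with O => 0 | S m => sumC f m + f m end.

Fixpoint prodC (f : nat -> C) (n : nat) : C :=
  match n with O => 1 | S m => prodC f m * f m end.

Lemma sumC_ext f g n : (forall k, (k < n)%nat -> f k = g k) -> sumC f n = sumC g n.
Proof.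
  induction n as [|n IH]; intros H; simpl; auto.
  rewrite IH by (intros; apply H; lia). rewrite H by lia. reflexivity.
Qed.

Lemma prodC_ext f g n : (forall k, (k < n)%nat -> f k = g k) -> prodC f n = prodC g n.
Proof.
  induction n as [|n IH]; intros H; simpl; auto.
  rewrite IH by (intros; apply H; lia). rewrite H by lia. reflexivity.
Qed.

Lemma sumC_S_l f n : sumC f (S n) = f 0%nat + sumC (fun k => f (S k)) n.
Proof.
  induction n as [|n IH]; [simpl; ring|].
  change (sumC f (S (S n))) with (sumC f (S n) + f (S n)). rewrite IH. simpl. ring.
Qed.

Lemma prodC_S_l f n : prodC f (S n) = f 0%nat * prodC (fun k => f (S k)) n.
Proof.
  induction n as [|n IH]; [simpl; ring|].
  change (prodC f (S (S n))) with (prodC f (S n) * f (S n)). rewrite IH. simpl. ring.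
Qed.

Lemma sumC_add f a b : sumC f (a + b) = sumC f a + sumC (fun k => f (a + k)%nat) b.
Proof.
  induction b as [|b IH]; simpl.
  - rewrite Nat.add_0_r. ring.
  - rewrite Nat.add_succ_r. simpl. rewrite IH. ring.
Qed.

Lemma prodC_add f a b : prodC f (a + b) = prodC f a * prodC (fun k => f (a + k)%nat) b.
Proof.
  induction b as [|b IH]; simpl.
  - rewrite Nat.add_0_r. ring.
  - rewrite Nat.add_succ_r. simpl. rewrite IH. ring.
Qed.

Lemma sumC_rev f n : sumC f n = sumC (fun k => f (n - 1 - k)%nat) n.
Proof.
  induction n as [|n IH]; [reflexivity|].
  change (sumC f (S n)) with (sumC f n + f n). rewrite IH, sumC_S_l, Cplus_comm.
  replace (S n - 1 - 0)%nat with n by lia. f_equal.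
  apply sumC_ext. intros k _. f_equal. lia.
Qed.

Lemma sumC_plus f g n : sumC (fun k => f k + g k) n = sumC f n + sumC g n.
Proof. induction n as [|n IH]; simpl; [ring|]. rewrite IH. ring. Qed.

Lemma sumC_scal c f n : sumC (fun k => c * f k) n = c * sumC f n.
Proof. induction n as [|n IH]; simpl; [ring|]. rewrite IH. ring. Qed.

Lemma prodC_mult f g n : prodC (fun k => f k * g k) n = prodC f n * prodC g n.
Proof. induction n as [|n IH]; simpl; [ring|]. rewrite IH. ring. Qed.

Lemma sumC_even_odd f n :
  sumC f (2 * n) = sumC (fun k => f (2 * k)%nat) n + sumC (fun k => f (2 * k + 1)%nat) n.
Proof.
  induction n as [|n IH]; [simpl; ring|].
  replace (2 * S n)%nat with (S (S (2 * n))) by lia. simpl. simpl in IH. rewrite IH.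
  replace (n + (n + 0) + 1)%nat with (S (n + (n + 0))) by lia. ring.
Qed.

Lemma prodC_pairs f n : prodC f (2 * n) = prodC (fun k => f (2 * k)%nat * f (2 * k + 1)%nat) n.
Proof.
  induction n as [|n IH]; [simpl; ring|].
  replace (2 * S n)%nat with (S (S (2 * n))) by lia. simpl. simpl in IH. rewrite IH.
  replace (n + (n + 0) + 1)%nat with (S (n + (n + 0))) by lia. ring.
Qed.

Lemma prodC_blocks f k n :
  prodC f (k * n) = prodC (fun j => prodC (fun r => f (k * j + r)%nat) k) n.
Proof.
  induction n as [|n IH]; [rewrite Nat.mul_0_r; reflexivity|].
  replace (k * S n)%nat with (k * n + k)%nat by lia. rewrite prodC_add, IH. reflexivity.
Qed.

Lemma prodC_nz (f : nat -> C) n : (forall i, f i <> 0) -> prodC f n <> 0.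
Proof.
  intros H. induction n as [|n IH]; simpl; [apply C1_nz | apply Cmult_neq_0; [exact IH | apply H]].
Qed.

(** * Limits of complex sequences *)

Lemma lim_Cmod (u : nat -> C) (l : C) :
  u --> l <-> forall eps, (0 < eps)%R ->
    exists N, forall n, (N <= n)%nat -> (Cmod (u n - l) < eps)%R.
Proof.
  rewrite filterlim_locally_ball_norm. split.
  - intros H eps Heps. exact (H (mkposreal eps Heps)).
  - intros H eps. exact (H eps (cond_pos eps)).
Qed.

Lemma lim_unique (u : nat -> C) (a b : C) : u --> a -> u --> b -> a = b.
Proof. exact (filterlim_locally_unique (V := C_NormedModule) u a b). Qed.

Lemma lim_subseq (u : nat -> C) (g : nat -> nat) (l : C) :
  filterlim g eventually eventually -> u --> l -> (fun n => u (g n)) --> l.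
Proof. intros Hg Hu. exact (filterlim_comp _ _ _ g u _ _ _ Hg Hu). Qed.

Lemma filterlim_eventually_of_ge (g : nat -> nat) (c : nat) :
  (forall n, (n - c <= g n)%nat) -> filterlim g eventually eventually.
Proof. intros Hg P [M HM]. exists (M + c)%nat. intros n Hn. apply HM. specialize (Hg n). lia. Qed.

Lemma lim_plus (u v : nat -> C) (a b : C) : u --> a -> v --> b -> (fun n => u n + v n) --> a + b.
Proof.
  intros Hu Hv.
  eapply filterlim_comp_2; [exact Hu | exact Hv | apply (filterlim_plus (V := C_NormedModule))].
Qed.

(* Coquelicot equips [C] with two uniform structures, the product one and the one of the
   absolute value [Cmod] (used by [filterlim_mult]); they have the same neighbourhoods. *)
Lemma locally_C_le_locally_abs (a : C) :
  filter_le (@locally C_UniformSpace a) (@locally (AbsRing_UniformSpace C_AbsRing) a).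
Proof.
  intros P HP. apply (locally_le_locally_norm (V := C_NormedModule)).
  exact (locally_norm_le_locally (V := AbsRing_NormedModule C_AbsRing) a P HP).
Qed.

Lemma locally_abs_le_locally_C (a : C) :
  filter_le (@locally (AbsRing_UniformSpace C_AbsRing) a) (@locally C_UniformSpace a).
Proof.
  intros P HP. apply (locally_le_locally_norm (V := AbsRing_NormedModule C_AbsRing)).
  exact (locally_norm_le_locally (V := C_NormedModule) a P HP).
Qed.

Lemma lim_mult (u v : nat -> C) (a b : C) : u --> a -> v --> b -> (fun n => u n * v n) --> a * b.
Proof.
  intros Hu Hv. apply (filterlim_filter_le_2 _ (locally_abs_le_locally_C (a * b))).
  eapply filterlim_comp_2.
  - exact (filterlim_filter_le_2 _ (locally_C_le_locally_abs a) Hu).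
  - exact (filterlim_filter_le_2 _ (locally_C_le_locally_abs b) Hv).
  - exact (filterlim_mult (K := C_AbsRing) a b).
Qed.

Lemma lim_scal (c : C) (u : nat -> C) (a : C) : u --> a -> (fun n => c * u n) --> c * a.
Proof. apply lim_mult, filterlim_const. Qed.

Lemma lim_inv (u : nat -> C) (a : C) : a <> 0 -> u --> a -> (fun n => / u n) --> / a.
Proof.
  intros Ha Hu. apply lim_Cmod. intros eps Heps. rewrite lim_Cmod in Hu.
  assert (Hma : (0 < Cmod a)%R) by exact (proj1 (Cmod_gt_0 a) Ha).
  destruct (Hu (Cmod a / 2)%R) as [N1 H1]; [lra|].
  destruct (Hu (eps * (Cmod a * Cmod a) / 2)%R) as [N2 H2];
    [apply Rdiv_lt_0_compat; [apply Rmult_lt_0_compat; nra | lra]|].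
  exists (N1 + N2)%nat. intros n Hn. specialize (H1 n ltac:(lia)). specialize (H2 n ltac:(lia)).
  assert (Hun : (Cmod a / 2 <= Cmod (u n))%R).
  { pose proof (Cmod_triangle (u n) (a - u n)) as T.
    replace (u n + (a - u n)) with a in T by ring.
    replace (a - u n) with (- (u n - a)) in T by ring. rewrite Cmod_opp in T. lra. }
  assert (Hu0 : u n <> 0) by (apply Cmod_gt_0; lra).
  replace (/ u n - / a) with (- (u n - a) / (u n * a)) by (field; auto).
  rewrite Cmod_div, Cmod_opp, Cmod_mult by (apply Cmult_neq_0; auto).
  apply Rlt_le_trans with (eps * (Cmod a * Cmod a) / 2 / (Cmod (u n) * Cmod a))%R.
  - apply Rmult_lt_compat_r; [apply Rinv_0_lt_compat; nra | exact H2].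
  - assert (0 < eps * Cmod a) by nra. apply Rle_div_l; nra.
Qed.

Lemma lim_div (u v : nat -> C) (a b : C) :
  b <> 0 -> u --> a -> v --> b -> (fun n => u n / v n) --> a / b.
Proof. intros Hb Hu Hv. apply lim_mult; [exact Hu | exact (lim_inv v b Hb Hv)]. Qed.

Lemma lim_bounded (u : nat -> C) (l : C) : u --> l -> exists B, forall n, (Cmod (u n) <= B)%R.
Proof.
  intros Hu. destruct (filterlim_bounded (V := C_NormedModule) u (ex_intro _ l Hu)) as [B HB].
  exists B. exact HB.
Qed.

Lemma lim_Cmod_le (u : nat -> C) (l c : C) (T : R) :
  u --> l -> (exists N, forall n, (N <= n)%nat -> (Cmod (u n - c) <= T)%R) -> (Cmod (l - c) <= T)%R.
Proof.
  intros Hu [N HN]. apply Rnot_lt_le. intros Hlt. rewrite lim_Cmod in Hu.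
  destruct (Hu (Cmod (l - c) - T)%R) as [N1 H1]; [lra|].
  specialize (H1 (N + N1)%nat ltac:(lia)). specialize (HN (N + N1)%nat ltac:(lia)).
  pose proof (Cmod_triangle (u (N + N1)%nat - c) (- (u (N + N1)%nat - l))) as T3.
  replace (u (N + N1)%nat - c + - (u (N + N1)%nat - l)) with (l - c) in T3 by ring.
  rewrite Cmod_opp in T3. lra.
Qed.

Lemma geometric_tail_small (K r eps : R) : (0 <= K)%R -> (0 <= r < 1)%R -> (0 < eps)%R ->
  exists N, forall n, (N <= n)%nat -> (K * r ^ n / (1 - r) < eps)%R.
Proof.
  intros HK Hr Heps.
  destruct (pow_lt_1_zero r ltac:(rewrite Rabs_pos_eq; lra) (eps * (1 - r) / (K + 1))%R)
    as [N HN]; [apply Rdiv_lt_0_compat; [apply Rmult_lt_0_compat|]; lra|].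
  exists N. intros n Hn. specialize (HN n Hn). rewrite Rabs_pos_eq in HN by (apply pow_le; lra).
  apply Rlt_div_l; [lra|].
  apply Rmult_lt_compat_l with (r := (K + 1)%R) in HN; [|lra].
  replace ((K + 1) * (eps * (1 - r) / (K + 1)))%R with (eps * (1 - r))%R in HN by (field; lra).
  assert (0 <= r ^ n)%R by (apply pow_le; lra). nra.
Qed.

Lemma Cmod_diff_geometric (u : nat -> C) (K r : R) : (0 <= K)%R -> (0 <= r < 1)%R ->
  (forall n, Cmod (u (S n) - u n) <= K * r ^ n)%R ->
  forall n m, (n <= m)%nat -> (Cmod (u m - u n) <= K * r ^ n / (1 - r))%R.
Proof.
  intros HK Hr Hstep n m Hnm. replace m with (n + (m - n))%nat by lia.
  generalize (m - n)%nat as k. intros k.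
  assert (Hrn : (0 <= r ^ n)%R) by (apply pow_le; lra).
  assert (Hrk : (0 <= r ^ k)%R) by (apply pow_le; lra).
  apply Rle_trans with (K * r ^ n * (1 - r ^ k) / (1 - r))%R.
  2: { apply Rmult_le_compat_r; [apply Rlt_le, Rinv_0_lt_compat; lra|].
       assert (0 <= K * r ^ n)%R by (apply Rmult_le_pos; lra). nra. }
  clear Hrk. induction k as [|k IH].
  - rewrite Nat.add_0_r. replace (u n - u n) with (RtoC 0) by ring.
    rewrite Cmod_0. simpl. apply Req_le. field. lra.
  - rewrite Nat.add_succ_r.
    replace (u (S (n + k)) - u n) with ((u (S (n + k)) - u (n + k)%nat) + (u (n + k)%nat - u n))
      by ring.
    eapply Rle_trans; [apply Cmod_triangle|].
    pose proof (Hstep (n + k)%nat) as Hs. rewrite pow_add in Hs.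
    replace (K * r ^ n * (1 - r ^ S k) / (1 - r))%R
      with (K * (r ^ n * r ^ k) + K * r ^ n * (1 - r ^ k) / (1 - r))%R by (simpl; field; lra).
    lra.
Qed.

Lemma lim_geometric (u : nat -> C) (K r : R) : (0 <= K)%R -> (0 <= r < 1)%R ->
  (forall n, Cmod (u (S n) - u n) <= K * r ^ n)%R ->
  exists l, u --> l /\ forall n, (Cmod (l - u n) <= K * r ^ n / (1 - r))%R.
Proof.
  intros HK Hr Hstep. pose proof (Cmod_diff_geometric u K r HK Hr Hstep) as Hdiff.
  assert (Hcauchy : exists l, u --> l).
  { apply (filterlim_locally_cauchy (U := C_CompleteNormedModule)). intros eps.
    destruct (geometric_tail_small K r eps HK Hr (cond_pos eps)) as [N HN].
    exists (fun n => (N <= n)%nat). split; [exists N; auto|].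
    assert (Hle : forall a b, (N <= a <= b)%nat -> ball (u a) eps (u b)).
    { intros a b Hab. apply C_NormedModule_mixin_compat1.
      eapply Rle_lt_trans; [apply Hdiff; lia | apply HN; lia]. }
    intros a b Ha Hb. destruct (Nat.le_gt_cases a b) as [Hab|Hab]; [apply Hle; lia|].
    apply ball_sym, Hle. lia. }
  destruct Hcauchy as [l Hl]. exists l. split; [exact Hl|].
  intros n. apply (lim_Cmod_le u); [exact Hl|]. exists n. apply Hdiff.
Qed.

Lemma lim_series_geometric (f : nat -> C) (K r : R) : (0 <= K)%R -> (0 <= r < 1)%R ->
  (forall n, Cmod (f n) <= K * r ^ n)%R ->
  exists l, sumC f --> l /\ forall n, (Cmod (l - sumC f n) <= K * r ^ n / (1 - r))%R.
Proof.
  intros HK Hr Hf. apply lim_geometric; [exact HK | exact Hr|].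
  intros n. simpl. replace (sumC f n + f n - sumC f n) with (f n) by ring. apply Hf.
Qed.

Lemma lim_sumC_scal (c : C) (t : nat -> C) (S : C) :
  sumC t --> S -> sumC (fun n => c * t n) --> c * S.
Proof.
  intros H. apply (filterlim_ext (fun n => c * sumC t n)); [|apply lim_scal, H].
  intros n. symmetry. apply sumC_scal.
Qed.

Lemma lim_sumC_even_odd (f g h : nat -> C) (l l1 l2 : C) :
  (forall n, f (2 * n)%nat = g n) -> (forall n, f (2 * n + 1)%nat = h n) ->
  sumC f --> l -> sumC g --> l1 -> sumC h --> l2 -> l = l1 + l2.
Proof.
  intros Hg Hh Hf Hl1 Hl2. apply (lim_unique (fun N => sumC f (2 * N))).
  - apply lim_subseq; [apply (filterlim_eventually_of_ge _ 0); lia | exact Hf].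
  - apply (filterlim_ext (fun N => sumC g N + sumC h N)); [|apply lim_plus; assumption].
    intros N. rewrite sumC_even_odd. f_equal; apply sumC_ext; intros k _; symmetry; auto.
Qed.

(** * Infinite products and Tannery's theorem *)

Lemma Cmod_prodC_le (f : nat -> C) (K r : R) : (0 <= K)%R -> (0 <= r < 1)%R ->
  (forall n, Cmod (f n - 1) <= K * r ^ n)%R -> forall n, (Cmod (prodC f n) <= exp (K / (1 - r)))%R.
Proof.
  intros HK Hr Hf n.
  (* [1 + t <= exp t] along the partial sums [K (1 - r^n) / (1 - r)] of the geometric series *)
  assert (Hinv : (Cmod (prodC f n) <= exp (K * (1 - r ^ n) / (1 - r)))%R).
  { induction n as [|n IH]; simpl.
    - rewrite Cmod_1. replace (K * (1 - 1) / (1 - r))%R with 0%R by (field; lra).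
      rewrite exp_0. lra.
    - rewrite Cmod_mult.
      replace (K * (1 - r * r ^ n) / (1 - r))%R with (K * (1 - r ^ n) / (1 - r) + K * r ^ n)%R
        by (field; lra).
      rewrite exp_plus. apply Rmult_le_compat; try apply Cmod_ge_0; [exact IH|].
      apply Rle_trans with (1 + K * r ^ n)%R; [|apply exp_ineq1_le].
      replace (f n) with ((f n - 1) + 1) by ring.
      eapply Rle_trans; [apply Cmod_triangle|]. rewrite Cmod_1. specialize (Hf n). lra. }
  eapply Rle_trans; [exact Hinv|].
  assert (Hle : (K * (1 - r ^ n) / (1 - r) <= K / (1 - r))%R).
  { apply Rmult_le_compat_r; [apply Rlt_le, Rinv_0_lt_compat; lra|].
    assert (0 <= r ^ n)%R by (apply pow_le; lra). nra. }
  destruct (Rle_lt_or_eq_dec _ _ Hle) as [Hlt|Heq];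
    [left; now apply exp_increasing | now rewrite Heq; right].
Qed.

Lemma lim_prodC (f : nat -> C) (K r : R) : (0 <= K)%R -> (0 <= r < 1)%R ->
  (forall n, Cmod (f n - 1) <= K * r ^ n)%R -> exists L, prodC f --> L.
Proof.
  intros HK Hr Hf. pose proof (Cmod_prodC_le f K r HK Hr Hf) as Hbound.
  set (E := exp (K / (1 - r))).
  assert (HE : (0 <= E)%R) by (left; apply exp_pos).
  destruct (lim_geometric (prodC f) (E * K) r) as [L [HL _]];
    [apply Rmult_le_pos; assumption | exact Hr | | exists L; exact HL].
  intros n. simpl. replace (prodC f n * f n - prodC f n) with (prodC f n * (f n - 1)) by ring.
  rewrite Cmod_mult, Rmult_assoc. apply Rmult_le_compat; try apply Cmod_ge_0; auto.
Qed.

(* The limit is non-zero because the products of the [/ f n] converge as well. *)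
Lemma lim_prodC_nz (f : nat -> C) (K r d : R) : (0 <= K)%R -> (0 <= r < 1)%R -> (0 < d)%R ->
  (forall n, Cmod (f n - 1) <= K * r ^ n)%R -> (forall n, d <= Cmod (f n))%R ->
  exists L : C, L <> 0 /\ prodC f --> L.
Proof.
  intros HK Hr Hd Hf Hfd.
  assert (Hnz : forall n, f n <> 0) by (intros n; apply Cmod_gt_0; specialize (Hfd n); lra).
  destruct (lim_prodC f K r HK Hr Hf) as [L HL].
  destruct (lim_prodC (fun n => / f n) (K / d) r) as [L' HL'];
    [apply Rdiv_le_0_compat; lra | exact Hr | |].
  { intros n. replace (/ f n - 1) with (- (f n - 1) / f n) by (field; auto).
    rewrite Cmod_div, Cmod_opp by auto. unfold Rdiv.
    rewrite Rmult_comm, (Rmult_comm K), Rmult_assoc.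
    apply Rmult_le_compat; [|apply Cmod_ge_0| |auto].
    - left. apply Rinv_0_lt_compat, Cmod_gt_0, Hnz.
    - apply Rinv_le_contravar; auto. }
  exists L. split; [|exact HL]. intros HL0.
  assert (Hone : (fun n => prodC f n * prodC (fun k => / f k) n) --> 1).
  { apply (filterlim_ext (fun _ => RtoC 1)); [|apply filterlim_const].
    intros n. rewrite <- prodC_mult. induction n as [|n IH]; simpl; [reflexivity|].
    rewrite <- IH. field. auto. }
  apply C1_nz. rewrite (lim_unique _ _ _ Hone (lim_mult _ _ _ _ HL HL')), HL0. ring.
Qed.

Lemma lim_prodC_one_plus (w : C) (c : nat -> C) : (Cmod w < 1)%R ->
  (forall j, Cmod (c j) <= Cmod w ^ S j)%R ->
  exists L : C, L <> 0 /\ prodC (fun j => 1 + c j) --> L.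
Proof.
  intros Hw Hc. pose proof (Cmod_ge_0 w) as Hw0.
  apply (lim_prodC_nz _ (Cmod w) (Cmod w) (1 - Cmod w)); try lra.
  - intros n. replace (1 + c n - 1) with (c n) by ring. apply Hc.
  - intros n. eapply Rle_trans; [|apply Cmod_one_plus_ge]. specialize (Hc n). simpl in Hc.
    assert (Cmod w ^ n <= 1)%R by (apply pow_le_1; lra).
    assert (0 <= Cmod w ^ n)%R by (apply pow_le; lra). nra.
Qed.

Lemma lim_sumC (a : nat -> nat -> C) (b : nat -> C) (m : nat) :
  (forall k, (fun n => a n k) --> b k) -> (fun n => sumC (a n) m) --> sumC b m.
Proof. intros H. induction m as [|m IH]; simpl; [apply filterlim_const | apply lim_plus; auto]. Qed.

Lemma tannery (a : nat -> nat -> C) (b : nat -> C) (g : nat -> nat) (K r : R) :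
  (0 <= K)%R -> (0 <= r < 1)%R -> (forall n k, Cmod (a n k) <= K * r ^ k)%R ->
  (forall k, (fun n => a n k) --> b k) -> filterlim g eventually eventually ->
  exists l, sumC b --> l /\ (fun n => sumC (a n) (g n)) --> l.
Proof.
  intros HK Hr Ha Hab Hg.
  assert (Hb : forall k, (Cmod (b k) <= K * r ^ k)%R).
  { intros k. replace (b k) with (b k - 0) by ring.
    apply (lim_Cmod_le (fun n => a n k)); [apply Hab|].
    exists 0%nat. intros n _. replace (a n k - 0) with (a n k) by ring. apply Ha. }
  destruct (lim_series_geometric b K r HK Hr Hb) as [l [Hl Htail]].
  exists l. split; [exact Hl|]. apply lim_Cmod. intros eps Heps.
  destruct (geometric_tail_small K r (eps / 3) HK Hr ltac:(lra)) as [M HM].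
  specialize (HM M (le_n M)). specialize (Htail M).
  pose proof (proj1 (lim_Cmod _ _) (lim_sumC a b M Hab) (eps / 3)%R ltac:(lra)) as [N1 HN1].
  destruct (Hg (fun n => (M <= n)%nat) (ex_intro _ M (fun n Hn => Hn))) as [N2 HN2].
  exists (N1 + N2)%nat. intros n Hn.
  specialize (HN1 n ltac:(lia)). specialize (HN2 n ltac:(lia)).
  pose proof (Cmod_diff_geometric (sumC (a n)) K r HK Hr) as Hdiff.
  assert (Htail_n : (Cmod (sumC (a n) (g n) - sumC (a n) M) <= K * r ^ M / (1 - r))%R).
  { apply Hdiff; [|exact HN2]. intros k. simpl.
    replace (sumC (a n) k + a n k - sumC (a n) k) with (a n k) by ring. apply Ha. }
  replace (sumC (a n) (g n) - l) with
    ((sumC (a n) (g n) - sumC (a n) M) + (sumC (a n) M - sumC b M) + - (l - sumC b M)) by ring.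
  pose proof (Cmod_triangle (sumC (a n) (g n) - sumC (a n) M) (sumC (a n) M - sumC b M)).
  eapply Rle_lt_trans; [apply Cmod_triangle|]. rewrite Cmod_opp. lra.
Qed.

Lemma bounded_of_eventually_bounded (t : nat -> R) (B : R) (N : nat) :
  (forall n, (N <= n)%nat -> (t n <= B)%R) -> exists K, forall n, (t n <= K)%R.
Proof.
  revert B. induction N as [|N IH]; intros B Ht; [exists B; intros n; apply Ht; lia|].
  apply (IH (Rmax B (t N))). intros n Hn. destruct (Nat.eq_dec n N) as [->|Hne]; [apply Rmax_r|].
  eapply Rle_trans; [apply Ht; lia | apply Rmax_l].
Qed.

Lemma gaussian_decay (a R0 : R) : (0 <= a < 1)%R -> (0 <= R0)%R ->
  exists K, (0 <= K)%R /\ forall j, (a ^ (j * j) * R0 ^ j <= K * (1 / 2) ^ j)%R.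
Proof.
  intros Ha HR.
  destruct (pow_lt_1_zero a ltac:(rewrite Rabs_pos_eq; lra) (/ (2 * (R0 + 1)))%R) as [J HJ];
    [apply Rinv_0_lt_compat; lra|].
  set (t := fun j => ((a ^ j * (2 * R0)) ^ j)%R).
  assert (Ht : forall j, (J <= j)%nat -> (t j <= 1)%R).
  { intros j Hj. specialize (HJ j Hj). rewrite Rabs_pos_eq in HJ by (apply pow_le; lra).
    assert (0 <= a ^ j)%R by (apply pow_le; lra).
    apply Rmult_lt_compat_r with (r := (2 * (R0 + 1))%R) in HJ; [|lra].
    rewrite Rinv_l in HJ by lra.
    apply pow_le_1. split; [apply Rmult_le_pos; lra | nra]. }
  destruct (bounded_of_eventually_bounded t 1 J Ht) as [K HK].
  exists (Rmax K 0). split; [apply Rmax_r|]. intros j.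
  replace (a ^ (j * j) * R0 ^ j)%R with (t j * (1 / 2) ^ j)%R.
  - apply Rmult_le_compat_r; [apply pow_le; lra|]. eapply Rle_trans; [apply HK | apply Rmax_l].
  - unfold t. rewrite pow_mult, <- !Rpow_mult_distr. f_equal. field.
Qed.

(** * Gaussian binomial coefficients *)

Fixpoint qbinom (p : C) (m k : nat) : C :=
  match m, k with
  | _, O => 1
  | O, S _ => 0
  | S m', S k' => qbinom p m' k' + p ^ S k' * qbinom p m' (S k')
  end.

Definition qpoch (p : C) (m : nat) : C := prodC (fun i => 1 - p ^ S i) m.

Fixpoint triangular (k : nat) : nat :=
  match k with O => O | S k' => (triangular k' + k')%nat end.

Lemma triangular_spec k : (2 * triangular k + k = k * k)%nat.
Proof. induction k; simpl; lia. Qed.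

Lemma qbinom_0 (p : C) m : qbinom p m 0 = 1.
Proof. destruct m; reflexivity. Qed.

Lemma qbinom_gt (p : C) m k : (m < k)%nat -> qbinom p m k = 0.
Proof.
  revert k. induction m as [|m IH]; intros k Hk; destruct k; try lia; simpl; [reflexivity|].
  rewrite !IH by lia. ring.
Qed.

Lemma qbinomial_theorem (p y : C) m :
  prodC (fun j => 1 + y * p ^ j) m = sumC (fun k => qbinom p m k * p ^ triangular k * y ^ k) (S m).
Proof.
  revert y. induction m as [|m IH]; intros y; [simpl; ring|].
  rewrite prodC_S_l, (prodC_ext _ (fun j => 1 + (y * p) * p ^ j)) by (intros k _; simpl; ring).
  rewrite IH, (sumC_S_l _ (S m)), qbinom_0.
  set (c := fun k => qbinom p m k * p ^ (triangular k + k) * y ^ k).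
  assert (Hrec : sumC (fun k => qbinom p (S m) (S k) * p ^ triangular (S k) * y ^ S k) (S m) =
      y * sumC (fun k => qbinom p m k * p ^ triangular k * (y * p) ^ k) (S m)
      + sumC (fun k => c (S k)) (S m)).
  { rewrite <- sumC_scal, <- sumC_plus. apply sumC_ext. intros k _. unfold c.
    simpl qbinom. simpl triangular. rewrite !Cpow_add_r, !Cpow_mult_l. simpl. ring. }
  assert (Hshift :
    sumC (fun k => qbinom p m k * p ^ triangular k * (y * p) ^ k) (S m) = sumC c (S m)).
  { apply sumC_ext. intros k _. unfold c. rewrite Cpow_add_r, Cpow_mult_l. ring. }
  assert (Hends : sumC c (S m) = 1 + sumC (fun k => c (S k)) (S m)).
  { rewrite sumC_S_l.
    change (sumC (fun k => c (S k)) (S m)) with (sumC (fun k => c (S k)) m + c (S m)).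
    replace (c 0%nat) with (RtoC 1) by (unfold c; rewrite qbinom_0; simpl; ring).
    replace (c (S m)) with (RtoC 0) by (unfold c; rewrite qbinom_gt by lia; ring). ring. }
  rewrite Hrec, Hshift, Hends. simpl. ring.
Qed.

Lemma qbinom_qpoch (p : C) m k : (k <= m)%nat ->
  qbinom p m k * qpoch p k * qpoch p (m - k) = qpoch p m.
Proof.
  revert k. induction m as [|m IH]; intros k Hk.
  - destruct k; [unfold qpoch; simpl; ring | lia].
  - destruct k as [|k]; [rewrite qbinom_0, Nat.sub_0_r; unfold qpoch; simpl; ring|].
    change (qbinom p (S m) (S k)) with (qbinom p m k + p ^ S k * qbinom p m (S k)).
    change (qpoch p (S k)) with (qpoch p k * (1 - p ^ S k)).
    change (qpoch p (S m)) with (qpoch p m * (1 - p ^ S m)).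
    replace (S m - S k)%nat with (m - k)%nat by lia.
    destruct (Nat.eq_dec k m) as [->|Hkm].
    + pose proof (IH m (le_n m)) as IH0. rewrite Nat.sub_diag in *.
      rewrite (qbinom_gt p m (S m)) by lia.
      transitivity (qbinom p m m * qpoch p m * qpoch p 0 * (1 - p ^ S m)); [ring|].
      rewrite IH0. reflexivity.
    + pose proof (IH k ltac:(lia)) as IH1. pose proof (IH (S k) ltac:(lia)) as IH2.
      replace (m - k)%nat with (S (m - S k)) in * by lia.
      set (j := (m - S k)%nat) in *.
      change (qpoch p (S j)) with (qpoch p j * (1 - p ^ S j)) in *.
      change (qpoch p (S k)) with (qpoch p k * (1 - p ^ S k)) in IH2.
      replace (p ^ S m) with (p ^ S k * p ^ S j) by (rewrite <- Cpow_add_r; f_equal; unfold j; lia).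
      transitivity (qbinom p m k * qpoch p k * (qpoch p j * (1 - p ^ S j)) * (1 - p ^ S k)
        + p ^ S k * (qbinom p m (S k) * (qpoch p k * (1 - p ^ S k)) * qpoch p j) * (1 - p ^ S j));
        [ring|].
      rewrite IH1, IH2. ring.
Qed.

Section QBinomialLimits.
Variable p : C.
Hypothesis Hp : (Cmod p < 1)%R.

Lemma qpoch_nz n : qpoch p n <> 0.
Proof. apply prodC_nz. intros i. apply one_minus_pow_nz, Hp. Qed.

Lemma lim_qpoch : exists L : C, L <> 0 /\ qpoch p --> L.
Proof.
  apply (lim_prodC_one_plus p (fun i => - p ^ S i) Hp).
  intros j. rewrite Cmod_opp, Cmod_pow. lra.
Qed.

Lemma qbinom_as_qpoch m k : (k <= m)%nat ->
  qbinom p m k = qpoch p m * / qpoch p k * / qpoch p (m - k).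
Proof.
  intros Hkm. rewrite <- (qbinom_qpoch p m k Hkm). field. split; apply qpoch_nz.
Qed.

Lemma qbinom_bounded : exists B, (0 <= B)%R /\ forall m k, (Cmod (qbinom p m k) <= B)%R.
Proof.
  destruct lim_qpoch as [L [HL Hlim]].
  destruct (lim_bounded _ _ Hlim) as [B1 HB1].
  destruct (lim_bounded _ _ (lim_inv _ _ HL Hlim)) as [B2 HB2].
  assert (HB1' : (0 <= B1)%R) by (eapply Rle_trans; [apply Cmod_ge_0 | apply (HB1 0%nat)]).
  assert (HB2' : (0 <= B2)%R) by (eapply Rle_trans; [apply Cmod_ge_0 | apply (HB2 0%nat)]).
  exists (B1 * B2 * B2)%R. split; [apply Rmult_le_pos; [apply Rmult_le_pos|]; assumption|].
  intros m k. destruct (Nat.le_gt_cases k m) as [Hkm|Hkm].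
  - rewrite qbinom_as_qpoch, !Cmod_mult by exact Hkm.
    apply Rmult_le_compat; [apply Rmult_le_pos; apply Cmod_ge_0 | apply Cmod_ge_0 | | apply HB2].
    apply Rmult_le_compat; [apply Cmod_ge_0 | apply Cmod_ge_0 | apply HB1 | apply HB2].
  - rewrite qbinom_gt, Cmod_0 by exact Hkm. apply Rmult_le_pos; [apply Rmult_le_pos|]; assumption.
Qed.

Lemma lim_qbinom (L : C) (m k : nat -> nat) : L <> 0 -> qpoch p --> L ->
  filterlim m eventually eventually -> filterlim k eventually eventually ->
  filterlim (fun n => m n - k n)%nat eventually eventually ->
  (fun n => qbinom p (m n) (k n)) --> / L.
Proof.
  intros HL Hlim Hm Hk Hmk.
  pose proof (lim_inv _ _ HL Hlim) as Hinv.
  apply (filterlim_ext_loc (fun n => qpoch p (m n) * / qpoch p (k n) * / qpoch p (m n - k n))).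
  - destruct (Hmk (fun d => (1 <= d)%nat) (ex_intro _ 1%nat (fun d Hd => Hd))) as [N HN].
    exists N. intros n Hn. specialize (HN n Hn). symmetry. apply qbinom_as_qpoch. lia.
  - replace (/ L) with (L * / L * / L) by (field; exact HL).
    apply lim_mult; [apply lim_mult|].
    + exact (lim_subseq _ _ _ Hm Hlim).
    + exact (lim_subseq (fun n => / qpoch p n) _ _ Hk Hinv).
    + exact (lim_subseq (fun n => / qpoch p n) _ _ Hmk Hinv).
Qed.

End QBinomialLimits.

(** * The Jacobi triple product *)

Definition theta_pos (q z : C) (j : nat) : C := q ^ (j * j) * z ^ j.
Definition theta_neg (q z : C) (j : nat) : C := q ^ (S j * S j) / z ^ S j.

Definition jacobi_finite (q z : C) (n : nat) : C :=
  prodC (fun i => (1 + z * q ^ (2 * i + 1)) * (1 + / z * q ^ (2 * i + 1))) n.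

Section FiniteJacobi.
Variables q z : C.
Hypotheses (Hq : q <> 0) (Hz : z <> 0).
Let p := q * q.
Let Hp : p <> 0 := Cmult_neq_0 q q Hq Hq.
Let pochhammer_2n n y := prodC (fun j => 1 + y * p ^ j) (2 * n).

Lemma pochhammer_2n_S n (y : C) :
  pochhammer_2n (S n) (y / p) = (1 + y / p) * pochhammer_2n n y * (1 + y * p ^ (2 * n)).
Proof.
  unfold pochhammer_2n. replace (2 * S n)%nat with (S (S (2 * n))) by lia. rewrite prodC_S_l.
  rewrite (prodC_ext (fun k => 1 + y / p * p ^ S k) (fun j => 1 + y * p ^ j))
    by (intros k _; rewrite Cpow_S; field; exact Hp).
  simpl. ring.
Qed.

(* Evaluating at [y = z q^(1 - 2n)] folds the [2n] factors into [n] symmetric pairs. *)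
Lemma pochhammer_2n_jacobi n :
  pochhammer_2n n (z * q / p ^ n) = z ^ n / q ^ (n * n) * jacobi_finite q z n.
Proof.
  induction n as [|n IH]; [unfold pochhammer_2n, jacobi_finite; simpl; field|].
  assert (Hqn : q ^ n <> 0) by (apply Cpow_nz; auto).
  assert (Hqnn : q ^ (n * n) <> 0) by (apply Cpow_nz; auto).
  replace (z * q / p ^ S n) with (z * q / p ^ n / p)
    by (simpl; field; split; [apply Cpow_nz|]; assumption).
  rewrite pochhammer_2n_S, IH. unfold jacobi_finite. cbn [prodC].
  assert (Epn : p ^ n = q ^ n * q ^ n) by (unfold p; apply Cpow_mult_l).
  replace (p ^ (2 * n)) with ((q ^ n * q ^ n) * (q ^ n * q ^ n))
    by (replace (2 * n)%nat with (n + n)%nat by lia; rewrite Cpow_add_r, Epn; ring).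
  replace (q ^ (2 * n + 1)) with (q ^ n * q ^ n * q)
    by (replace (2 * n + 1)%nat with (n + n + 1)%nat by lia; rewrite !Cpow_add_r; simpl; ring).
  replace (q ^ (S n * S n)) with (q ^ (n * n) * q ^ n * q ^ n * q)
    by (replace (S n * S n)%nat with (n * n + n + n + 1)%nat by lia;
        rewrite !Cpow_add_r; simpl; ring).
  rewrite Epn, Cpow_S. unfold p. field. repeat split; auto.
Qed.

Lemma pochhammer_term n k d (c : C) : (n * n + k * k = 2 * n * k + d * d)%nat ->
  q ^ (n * n) / z ^ n * (c * p ^ triangular k * (z * q / p ^ n) ^ k)
  = c * q ^ (d * d) * z ^ k / z ^ n.
Proof.
  intros Hd.
  assert (Hpnk : (p ^ n) ^ k <> 0) by (apply Cpow_nz, Cpow_nz; exact Hp).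
  assert (Hzn : z ^ n <> 0) by (apply Cpow_nz; exact Hz).
  rewrite Cpow_div, Cpow_mult_l by (apply Cpow_nz; exact Hp).
  assert (Hexp : q ^ (n * n) * p ^ triangular k * q ^ k = (p ^ n) ^ k * q ^ (d * d)).
  { unfold p. rewrite !Cpow_mult_l, <- !Cpow_mult_r, <- !Cpow_add_r. f_equal.
    pose proof (triangular_spec k). nia. }
  transitivity (c * (q ^ (n * n) * p ^ triangular k * q ^ k) * z ^ k / ((p ^ n) ^ k * z ^ n));
    [field; auto|].
  rewrite Hexp. field. auto.
Qed.

Lemma jacobi_finite_sum n : jacobi_finite q z n =
  sumC (fun j => qbinom p (2 * n) (n - 1 - j) * theta_neg q z j) n
  + sumC (fun j => qbinom p (2 * n) (n + j) * theta_pos q z j) (S n).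
Proof.
  pose proof (pochhammer_2n_jacobi n) as E. unfold pochhammer_2n in E.
  rewrite qbinomial_theorem in E.
  assert (Hzn : z ^ n <> 0) by (apply Cpow_nz; auto).
  assert (Hqn : q ^ (n * n) <> 0) by (apply Cpow_nz; auto).
  replace (jacobi_finite q z n) with (q ^ (n * n) / z ^ n *
    sumC (fun k => qbinom p (2 * n) k * p ^ triangular k * (z * q / p ^ n) ^ k) (S (2 * n)))
    by (rewrite E; field; auto).
  rewrite <- sumC_scal. replace (S (2 * n)) with (n + S n)%nat by lia.
  rewrite sumC_add, sumC_rev. f_equal; apply sumC_ext; intros j Hj; unfold theta_neg, theta_pos.
  - rewrite (pochhammer_term n (n - 1 - j) (S j)) by nia.
    replace (z ^ n) with (z ^ (n - 1 - j) * z ^ S j) by (rewrite <- Cpow_add_r; f_equal; lia).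
    field. split; apply Cpow_nz; auto.
  - rewrite (pochhammer_term n (n + j) j), Cpow_add_r by nia.
    field. exact Hzn.
Qed.

End FiniteJacobi.

Definition jacobi_partial (q z : C) (N : nat) : C :=
  prodC (fun i => (1 - (q * q) ^ S i) * ((1 + z * q ^ (2 * i + 1)) * (1 + / z * q ^ (2 * i + 1))))
    N.

Lemma theta_pos_bound (q z : C) : (Cmod q < 1)%R ->
  exists K, (0 <= K)%R /\ forall j, (Cmod (theta_pos q z j) <= K * (1 / 2) ^ j)%R.
Proof.
  intros Hq. destruct (gaussian_decay (Cmod q) (Cmod z)) as [K [HK H]];
    [split; [apply Cmod_ge_0 | exact Hq] | apply Cmod_ge_0|].
  exists K. split; [exact HK|]. intros j. unfold theta_pos. rewrite Cmod_mult, !Cmod_pow. apply H.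
Qed.

Lemma theta_neg_bound (q z : C) : z <> 0 -> (Cmod q < 1)%R ->
  exists K, (0 <= K)%R /\ forall j, (Cmod (theta_neg q z j) <= K * (1 / 2) ^ j)%R.
Proof.
  intros Hz Hq. pose proof (proj1 (Cmod_gt_0 z) Hz) as Hz0.
  destruct (gaussian_decay (Cmod q) (/ Cmod z)) as [K [HK H]];
    [split; [apply Cmod_ge_0 | exact Hq] | left; apply Rinv_0_lt_compat, Hz0|].
  exists K. split; [exact HK|]. intros j. unfold theta_neg.
  rewrite Cmod_div, !Cmod_pow by (apply Cpow_nz, Hz). unfold Rdiv. rewrite <- pow_inv.
  eapply Rle_trans; [apply H|]. apply Rmult_le_compat_l; [exact HK|].
  apply pow_le_pow_decr; lra || lia.
Qed.

Section JacobiTripleProduct.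
Variables q z : C.
Hypotheses (Hq : q <> 0) (Hz : z <> 0) (Hq1 : (Cmod q < 1)%R).
Let p := q * q.

Lemma Cmod_sqr_lt_1 : (Cmod p < 1)%R.
Proof. unfold p. rewrite Cmod_mult. pose proof (Cmod_ge_0 q). nra. Qed.

Lemma lim_qbinom_series (L : C) (t : nat -> C) (k : nat -> nat -> nat) (g : nat -> nat) :
  L <> 0 -> (exists K, (0 <= K)%R /\ forall j, (Cmod (t j) <= K * (1 / 2) ^ j)%R) ->
  (forall j, (fun N => qbinom p (2 * N) (k N j)) --> / L) -> filterlim g eventually eventually ->
  exists S, sumC t --> S /\
    (fun N => sumC (fun j => qbinom p (2 * N) (k N j) * t j) (g N)) --> / L * S.
Proof.
  intros HL [K [HK Ht]] Hk Hg.
  destruct (qbinom_bounded p Cmod_sqr_lt_1) as [B [HB0 HB]].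
  destruct (tannery (fun N j => qbinom p (2 * N) (k N j) * t j) (fun j => / L * t j) g
    (B * K) (1 / 2))
    as [l [Hl Hlim]]; [apply Rmult_le_pos; assumption | lra | | | exact Hg |].
  - intros N j. rewrite Cmod_mult, Rmult_assoc.
    apply Rmult_le_compat; [apply Cmod_ge_0 | apply Cmod_ge_0 | apply HB | apply Ht].
  - intros j. apply lim_mult; [apply Hk | apply filterlim_const].
  - exists (L * l). split.
    + apply (filterlim_ext (fun n => L * sumC (fun j => / L * t j) n)); [|apply lim_scal, Hl].
      intros n. rewrite sumC_scal. field. exact HL.
    + replace (/ L * (L * l)) with l by (field; exact HL). exact Hlim.
Qed.

Theorem jacobi_triple_product : exists S1 S2,
  sumC (theta_pos q z) --> S1 /\ sumC (theta_neg q z) --> S2 /\ jacobi_partial q z --> S1 + S2.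
Proof.
  destruct (lim_qpoch p Cmod_sqr_lt_1) as [L [HL Hlim]].
  destruct (lim_qbinom_series L (theta_pos q z) (fun N j => N + j)%nat S) as [S1 [H1 H1']];
    [exact HL | apply theta_pos_bound, Hq1 | | apply (filterlim_eventually_of_ge _ 0); lia |].
  { intros j. apply (lim_qbinom p Cmod_sqr_lt_1); [exact HL | exact Hlim | ..];
      [apply (filterlim_eventually_of_ge _ 0) | apply (filterlim_eventually_of_ge _ 0)
      | apply (filterlim_eventually_of_ge _ j)]; lia. }
  destruct (lim_qbinom_series L (theta_neg q z) (fun N j => N - 1 - j)%nat (fun N => N))
    as [S2 [H2 H2']]; [exact HL | apply theta_neg_bound; assumption | |
      apply (filterlim_eventually_of_ge _ 0); lia |].
  { intros j. apply (lim_qbinom p Cmod_sqr_lt_1); [exact HL | exact Hlim | ..];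
      [apply (filterlim_eventually_of_ge _ 0) | apply (filterlim_eventually_of_ge _ (S j))
      | apply (filterlim_eventually_of_ge _ 0)]; lia. }
  exists S1, S2. split; [exact H1 | split; [exact H2|]].
  apply (filterlim_ext (fun N => qpoch p N * jacobi_finite q z N)).
  { intros N. unfold jacobi_partial, qpoch, jacobi_finite. symmetry. apply prodC_mult. }
  replace (S1 + S2) with (L * (/ L * S2 + / L * S1)) by (field; exact HL).
  apply lim_mult; [exact Hlim|].
  eapply filterlim_ext; [intros N; symmetry; apply jacobi_finite_sum; assumption|].
  apply lim_plus; assumption.
Qed.

End JacobiTripleProduct.

(** * Dissection of a theta series *)

Definition sign (n : nat) : C := (- (1)) ^ n.

Lemma sign_even k : sign (2 * k) = 1.
Proof.
  unfold sign. rewrite Cpow_mult_r. replace ((- (1)) ^ 2) with (RtoC 1) by (simpl; ring).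
  apply Cpow_1_l.
Qed.

Lemma sign_add_even k m : sign (2 * k + m) = sign m.
Proof. unfold sign. rewrite Cpow_add_r. fold (sign (2 * k)). rewrite sign_even. ring. Qed.

Lemma sign_odd k : sign (2 * k + 1) = - (1).
Proof. rewrite sign_add_even. unfold sign. simpl. ring. Qed.

Lemma sign_S k : sign (S k) = - sign k.
Proof. unfold sign. simpl. ring. Qed.

Lemma sign_sqr k : sign k * sign k = 1.
Proof.
  unfold sign. rewrite <- Cpow_add_r. replace (k + k)%nat with (2 * k)%nat by lia. apply sign_even.
Qed.

Lemma sign_nz k : sign k <> 0.
Proof. intros E. apply C1_nz. rewrite <- (sign_sqr k), E. ring. Qed.

Lemma Cpow_opp (y : C) n : (- y) ^ n = sign n * y ^ n.
Proof. unfold sign. rewrite <- Cpow_mult_l. f_equal. ring. Qed.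

Lemma Ci_sqr : Ci * Ci = - (1).
Proof. apply injective_projections; simpl; ring. Qed.

Lemma Ci_pow_even k : Ci ^ (2 * k) = sign k.
Proof. rewrite Cpow_mult_r. unfold sign. f_equal. simpl. rewrite Cmult_1_r. apply Ci_sqr. Qed.

(* The theta series [sum (i y^2)^(n^2) (i y)^n] splits according to the parity of [n] into the
   two series of modulus [y^8] appearing in [v]. *)
Section ThetaDissection.
Variable y : C.
Hypothesis Hy : y <> 0.

Lemma theta_pos_Ci_even n :
  theta_pos (Ci * y ^ 2) (Ci * y) (2 * n) = theta_pos ((y ^ 2) ^ 4) (- y ^ 2) n.
Proof.
  unfold theta_pos. rewrite !Cpow_mult_l, Cpow_opp, <- !Cpow_mult_r.
  replace (2 * n * (2 * n))%nat with (2 * (2 * (n * n)))%nat by nia.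
  rewrite !Ci_pow_even, sign_even.
  replace (2 * (2 * (2 * (n * n))))%nat with (2 * (4 * (n * n)))%nat by nia. ring.
Qed.

Lemma theta_pos_Ci_odd n :
  theta_pos (Ci * y ^ 2) (Ci * y) (2 * n + 1) = y * theta_neg ((y ^ 2) ^ 4) (- (y ^ 2) ^ 3) n.
Proof.
  unfold theta_pos, theta_neg. rewrite !Cpow_mult_l, Cpow_opp, <- !Cpow_mult_r.
  set (E := ((2 * n + 1) * (2 * n + 1))%nat).
  assert (Hi : Ci ^ E * Ci ^ (2 * n + 1) = sign (S n)).
  { rewrite <- Cpow_add_r. replace (E + (2 * n + 1))%nat with (2 * (2 * (n * (n + 1)) + S n))%nat
      by (unfold E; nia).
    rewrite Ci_pow_even, sign_add_even. reflexivity. }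
  assert (Hy' :
    y * y ^ (2 * (4 * (S n * S n))) = y ^ (2 * E) * y ^ (2 * n + 1) * y ^ (2 * (3 * S n))).
  { rewrite <- !Cpow_add_r, <- Cpow_S. f_equal. unfold E. nia. }
  transitivity (Ci ^ E * Ci ^ (2 * n + 1) * (y ^ (2 * E) * y ^ (2 * n + 1))); [ring|].
  rewrite Hi. transitivity (sign (S n) * (y * y ^ (2 * (4 * (S n * S n))) / y ^ (2 * (3 * S n)))).
  - rewrite Hy'. field. apply Cpow_nz, Hy.
  - rewrite <- (Cmult_1_l (y * (_ / _))), <- (sign_sqr (S n)).
    field. split; [apply Cpow_nz, Hy | apply sign_nz].
Qed.

Lemma theta_neg_Ci_even n :
  theta_neg (Ci * y ^ 2) (Ci * y) (2 * n) = y * theta_pos ((y ^ 2) ^ 4) (- (y ^ 2) ^ 3) n.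
Proof.
  unfold theta_pos, theta_neg. rewrite !Cpow_mult_l, Cpow_opp, <- !Cpow_mult_r.
  set (E := (S (2 * n) * S (2 * n))%nat).
  assert (Hi : Ci ^ E = sign n * Ci ^ S (2 * n)).
  { replace E with (2 * (2 * (n * n) + n) + S (2 * n))%nat by (unfold E; nia).
    rewrite Cpow_add_r, Ci_pow_even, sign_add_even. reflexivity. }
  assert (Hy' : y ^ (2 * E) = y * y ^ (2 * (4 * (n * n))) * y ^ (2 * (3 * n)) * y ^ S (2 * n)).
  { rewrite <- Cpow_S, <- !Cpow_add_r. f_equal. unfold E. nia. }
  rewrite Hi, Hy'. field. split; [apply Cpow_nz, Hy | apply Cpow_nz, Ci_nz].
Qed.

Lemma theta_neg_Ci_odd n :
  theta_neg (Ci * y ^ 2) (Ci * y) (2 * n + 1) = theta_neg ((y ^ 2) ^ 4) (- y ^ 2) n.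
Proof.
  unfold theta_neg. rewrite !Cpow_mult_l, Cpow_opp, <- !Cpow_mult_r.
  replace (S (2 * n + 1) * S (2 * n + 1))%nat with (2 * (2 * ((n + 1) * (n + 1))))%nat by nia.
  replace (S (2 * n + 1)) with (2 * S n)%nat by lia.
  rewrite !Ci_pow_even, sign_even.
  replace (2 * (2 * (2 * ((n + 1) * (n + 1)))))%nat with (2 * (4 * (S n * S n)))%nat by nia.
  field. split; [apply Cpow_nz, Hy | apply sign_nz].
Qed.

End ThetaDissection.

Local Notation jacobi_2_14 y := (jacobi_partial ((y ^ 2) ^ 4) (- (y ^ 2) ^ 3)).
Local Notation jacobi_6_10 y := (jacobi_partial ((y ^ 2) ^ 4) (- y ^ 2)).
Local Notation jacobi_Ci y := (jacobi_partial (Ci * y ^ 2) (Ci * y)).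

Theorem theta_dissection (y tA tB : C) : y <> 0 -> (Cmod y < 1)%R ->
  jacobi_2_14 y --> tA -> jacobi_6_10 y --> tB -> jacobi_Ci y --> tB + y * tA.
Proof.
  intros Hy Hy1 HA HB.
  assert (Hy2 : y ^ 2 <> 0) by (apply Cpow_nz, Hy).
  assert (Hy8 : (y ^ 2) ^ 4 <> 0) by (apply Cpow_nz, Hy2).
  assert (Hy8' : (Cmod ((y ^ 2) ^ 4) < 1)%R) by (apply Cmod_pow_S_lt_1, Cmod_pow_S_lt_1, Hy1).
  destruct (jacobi_triple_product (Ci * y ^ 2) (Ci * y)) as [S1 [S2 [H1 [H2 HS]]]].
  { apply Cmult_neq_0; [apply Ci_nz | exact Hy2]. }
  { apply Cmult_neq_0; [apply Ci_nz | exact Hy]. }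
  { rewrite Cmod_mult, Cmod_Ci, Rmult_1_l. apply Cmod_pow_S_lt_1, Hy1. }
  destruct (jacobi_triple_product ((y ^ 2) ^ 4) (- (y ^ 2) ^ 3)) as [A1 [A2 [HA1 [HA2 HAS]]]];
    [exact Hy8 | apply Copp_nz, Cpow_nz, Hy2 | exact Hy8' |].
  destruct (jacobi_triple_product ((y ^ 2) ^ 4) (- y ^ 2)) as [B1 [B2 [HB1 [HB2 HBS]]]];
    [exact Hy8 | apply Copp_nz, Hy2 | exact Hy8' |].
  rewrite (lim_unique _ _ _ HA HAS), (lim_unique _ _ _ HB HBS).
  replace (B1 + B2 + y * (A1 + A2)) with ((B1 + y * A2) + (y * A1 + B2)) by ring.
  rewrite <- (lim_sumC_even_odd _ _ _ S1 _ _ (theta_pos_Ci_even y) (theta_pos_Ci_odd y Hy) H1 HB1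
    (lim_sumC_scal y _ _ HA2)).
  rewrite <- (lim_sumC_even_odd _ _ _ S2 _ _ (theta_neg_Ci_even y Hy) (theta_neg_Ci_odd y Hy) H2
    (lim_sumC_scal y _ _ HA1) HB2).
  exact HS.
Qed.

(** * Product identities *)

Definition weber_prod (x : C) (a N : nat) : C := prodC (fun j => 1 + x ^ (8 * j + a)) N.

Lemma jacobi_factor_neg_pow (y : C) (b c i : nat) : y <> 0 -> (c <= b * (2 * i + 1))%nat ->
  (1 - (y ^ b * y ^ b) ^ S i)
    * ((1 + - y ^ c * (y ^ b) ^ (2 * i + 1)) * (1 + / - y ^ c * (y ^ b) ^ (2 * i + 1)))
  = (1 - y ^ (2 * b * S i)) * ((1 - y ^ (b * (2 * i + 1) + c)) * (1 - y ^ (b * (2 * i + 1) - c))).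
Proof.
  intros Hy Hc. set (e := (b * (2 * i + 1) - c)%nat).
  assert (Hb : (y ^ b * y ^ b) ^ S i = y ^ (2 * b * S i))
    by (rewrite <- Cpow_add_r, <- Cpow_mult_r; f_equal; lia).
  assert (He : (y ^ b) ^ (2 * i + 1) = y ^ e * y ^ c)
    by (rewrite <- Cpow_mult_r, <- Cpow_add_r; f_equal; unfold e; lia).
  assert (He' : y ^ (b * (2 * i + 1) + c) = y ^ e * y ^ c * y ^ c)
    by (rewrite <- !Cpow_add_r; f_equal; unfold e; lia).
  rewrite Hb, He, He'. field. apply Cpow_nz, Hy.
Qed.

Lemma jacobi_2_14_factor (y : C) i : y <> 0 ->
  (1 - ((y ^ 2) ^ 4 * (y ^ 2) ^ 4) ^ S i) *
    ((1 + - (y ^ 2) ^ 3 * ((y ^ 2) ^ 4) ^ (2 * i + 1))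
      * (1 + / - (y ^ 2) ^ 3 * ((y ^ 2) ^ 4) ^ (2 * i + 1)))
  = (1 - y ^ (16 * i + 16)) * ((1 - y ^ (16 * i + 14)) * (1 - y ^ (16 * i + 2))).
Proof.
  intros Hy. rewrite <- !(Cpow_mult_r y 2), (jacobi_factor_neg_pow y (2 * 4) (2 * 3) i Hy) by lia.
  replace (2 * (2 * 4) * S i)%nat with (16 * i + 16)%nat by lia.
  replace (2 * 4 * (2 * i + 1) + 2 * 3)%nat with (16 * i + 14)%nat by lia.
  replace (2 * 4 * (2 * i + 1) - 2 * 3)%nat with (16 * i + 2)%nat by lia.
  reflexivity.
Qed.

Lemma jacobi_6_10_factor (y : C) i : y <> 0 ->
  (1 - ((y ^ 2) ^ 4 * (y ^ 2) ^ 4) ^ S i) *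
    ((1 + - y ^ 2 * ((y ^ 2) ^ 4) ^ (2 * i + 1)) * (1 + / - y ^ 2 * ((y ^ 2) ^ 4) ^ (2 * i + 1)))
  = (1 - y ^ (16 * i + 16)) * ((1 - y ^ (16 * i + 10)) * (1 - y ^ (16 * i + 6))).
Proof.
  intros Hy. rewrite <- (Cpow_mult_r y 2 4), (jacobi_factor_neg_pow y (2 * 4) 2 i Hy) by lia.
  replace (2 * (2 * 4) * S i)%nat with (16 * i + 16)%nat by lia.
  replace (2 * 4 * (2 * i + 1) + 2)%nat with (16 * i + 10)%nat by lia.
  replace (2 * 4 * (2 * i + 1) - 2)%nat with (16 * i + 6)%nat by lia.
  reflexivity.
Qed.

Definition jacobi_Ci_factor (y : C) (i : nat) : C :=
  (1 - sign (S i) * y ^ (4 * i + 4))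
    * ((1 + sign (S i) * y ^ (4 * i + 3)) * (1 + sign i * y ^ (4 * i + 1))).

Lemma jacobi_Ci_factor_spec (y : C) i : y <> 0 ->
  (1 - (Ci * y ^ 2 * (Ci * y ^ 2)) ^ S i) *
    ((1 + Ci * y * (Ci * y ^ 2) ^ (2 * i + 1)) * (1 + / (Ci * y) * (Ci * y ^ 2) ^ (2 * i + 1)))
  = jacobi_Ci_factor y i.
Proof.
  intros Hy. unfold jacobi_Ci_factor.
  assert (Hq : (Ci * y ^ 2 * (Ci * y ^ 2)) ^ S i = sign (S i) * y ^ (4 * i + 4)).
  { replace (Ci * y ^ 2 * (Ci * y ^ 2)) with (- y ^ 4)
      by (symmetry; transitivity (Ci * Ci * (y ^ 2 * y ^ 2)); [ring | rewrite Ci_sqr; simpl; ring]).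
    rewrite Cpow_opp, <- Cpow_mult_r. do 2 f_equal. lia. }
  assert (Hodd : (Ci * y ^ 2) ^ (2 * i + 1) = sign i * Ci * y ^ S (4 * i + 1)).
  { rewrite Cpow_mult_l, <- Cpow_mult_r, Cpow_add_r, Ci_pow_even.
    replace (2 * (2 * i + 1))%nat with (S (4 * i + 1)) by lia. simpl. ring. }
  assert (Hz : Ci * y * (Ci * y ^ 2) ^ (2 * i + 1) = sign (S i) * y ^ (4 * i + 3)).
  { rewrite Hodd, sign_S. replace (4 * i + 3)%nat with (S (S (4 * i + 1))) by lia.
    transitivity (sign i * (Ci * Ci) * (y * y ^ S (4 * i + 1)));
      [ring | rewrite Ci_sqr; simpl; ring]. }
  assert (Hz' : / (Ci * y) * (Ci * y ^ 2) ^ (2 * i + 1) = sign i * y ^ (4 * i + 1)).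
  { rewrite Hodd, Cpow_S. field. split; [exact Hy | apply Ci_nz]. }
  rewrite Hq, Hz, Hz'. reflexivity.
Qed.

Lemma jacobi_Ci_factor_opp (x : C) i : jacobi_Ci_factor x i * jacobi_Ci_factor (- x) i =
  (1 - sign (S i) * x ^ (4 * i + 4)) * (1 - sign (S i) * x ^ (4 * i + 4))
    * ((1 - x ^ (8 * i + 6)) * (1 - x ^ (8 * i + 2))).
Proof.
  unfold jacobi_Ci_factor. rewrite !Cpow_opp.
  replace (4 * i + 4)%nat with (2 * (2 * i + 2))%nat by lia.
  replace (4 * i + 3)%nat with (2 * (2 * i + 1) + 1)%nat by lia.
  replace (4 * i + 1)%nat with (2 * (2 * i) + 1)%nat by lia.
  rewrite sign_even, !sign_odd.
  transitivity ((1 - sign (S i) * x ^ (2 * (2 * i + 2))) * (1 - sign (S i) * x ^ (2 * (2 * i + 2)))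
    * ((1 - sign (S i) * sign (S i) * (x ^ (2 * (2 * i + 1) + 1) * x ^ (2 * (2 * i + 1) + 1)))
      * (1 - sign i * sign i * (x ^ (2 * (2 * i) + 1) * x ^ (2 * (2 * i) + 1))))); [ring|].
  rewrite !sign_sqr, <- !Cpow_add_r.
  replace (2 * (2 * i + 1) + 1 + (2 * (2 * i + 1) + 1))%nat with (8 * i + 6)%nat by lia.
  replace (2 * (2 * i) + 1 + (2 * (2 * i) + 1))%nat with (8 * i + 2)%nat by lia.
  ring.
Qed.

Lemma jacobi_2_14_prod (y : C) N : y <> 0 -> jacobi_2_14 y N =
  prodC (fun j => (1 - y ^ (16 * j + 16)) * ((1 - y ^ (16 * j + 14)) * (1 - y ^ (16 * j + 2)))) N.
Proof. intros Hy. apply prodC_ext. intros i _. apply jacobi_2_14_factor, Hy. Qed.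

Lemma jacobi_6_10_prod (y : C) N : y <> 0 -> jacobi_6_10 y N =
  prodC (fun j => (1 - y ^ (16 * j + 16)) * ((1 - y ^ (16 * j + 10)) * (1 - y ^ (16 * j + 6)))) N.
Proof. intros Hy. apply prodC_ext. intros i _. apply jacobi_6_10_factor, Hy. Qed.

Lemma jacobi_Ci_prod (y : C) N : y <> 0 -> jacobi_Ci y N = prodC (jacobi_Ci_factor y) N.
Proof. intros Hy. apply prodC_ext. intros i _. apply jacobi_Ci_factor_spec, Hy. Qed.

(* Pairing the factors [2 j] and [2 j + 1] of [jacobi_Ci x * jacobi_Ci (- x)]. *)
Lemma jacobi_Ci_opp_prod (x : C) N : x <> 0 ->
  weber_prod x 8 N * weber_prod x 8 N * (jacobi_Ci x (2 * N) * jacobi_Ci (- x) (2 * N))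
  = weber_prod x 4 N * weber_prod x 4 N * (jacobi_2_14 x N * jacobi_6_10 x N).
Proof.
  intros Hx.
  rewrite !jacobi_Ci_prod, jacobi_2_14_prod, jacobi_6_10_prod by (exact Hx || apply Copp_nz, Hx).
  rewrite <- prodC_mult, (prodC_ext _ _ _ (fun i _ => jacobi_Ci_factor_opp x i)), prodC_pairs.
  unfold weber_prod. rewrite <- !prodC_mult. apply prodC_ext. intros j _.
  replace (S (2 * j)) with (2 * j + 1)%nat by lia.
  replace (S (2 * j + 1)) with (2 * (j + 1))%nat by lia.
  rewrite sign_odd, sign_even.
  replace (4 * (2 * j) + 4)%nat with (8 * j + 4)%nat by lia.
  replace (4 * (2 * j + 1) + 4)%nat with (8 * j + 8)%nat by lia.
  replace (8 * (2 * j) + 6)%nat with (16 * j + 6)%nat by lia.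
  replace (8 * (2 * j) + 2)%nat with (16 * j + 2)%nat by lia.
  replace (8 * (2 * j + 1) + 6)%nat with (16 * j + 14)%nat by lia.
  replace (8 * (2 * j + 1) + 2)%nat with (16 * j + 10)%nat by lia.
  replace (x ^ (16 * j + 16)) with (x ^ (8 * j + 8) * x ^ (8 * j + 8))
    by (rewrite <- Cpow_add_r; f_equal; lia).
  ring.
Qed.

(** * Weber's modular equation *)

Lemma cexp_add (a b : C) : cexp (a + b) = cexp a * cexp b.
Proof.
  destruct a as [a1 a2], b as [b1 b2]. unfold cexp. simpl.
  rewrite exp_plus, cos_plus, sin_plus. apply injective_projections; simpl; ring.
Qed.

Lemma cexp_nat (k : nat) (w : C) : cexp (RtoC (INR k) * w) = cexp w ^ k.
Proof.
  induction k as [|k IH].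
  - replace (RtoC (INR 0) * w) with (RtoC 0) by (simpl; ring).
    unfold cexp. simpl. rewrite exp_0, cos_0, sin_0. apply injective_projections; simpl; ring.
  - rewrite S_INR, RtoC_plus.
    replace ((RtoC (INR k) + RtoC 1) * w) with (RtoC (INR k) * w + w) by ring.
    rewrite cexp_add, IH. simpl. ring.
Qed.

Lemma Cmod_cexp (w : C) : Cmod (cexp w) = exp (Re w).
Proof.
  unfold Cmod, cexp. simpl fst. simpl snd.
  replace ((exp (Re w) * cos (Im w)) ^ 2 + (exp (Re w) * sin (Im w)) ^ 2)%R with (exp (Re w) ^ 2)%R.
  - apply sqrt_pow2. left. apply exp_pos.
  - pose proof (sin2_cos2 (Im w)) as H. unfold Rsqr in H. simpl. nra.
Qed.

Lemma qpow_scale (r c : R) (k : nat) (t : C) : (r * c = INR k / 2)%R ->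
  qpow r (RtoC c * t) = qpow (1 / 2) t ^ k.
Proof.
  intros H. unfold qpow. rewrite <- cexp_nat. f_equal.
  transitivity (RtoC (2 * PI * (r * c)) * Ci * t); [rewrite !RtoC_mult; ring|].
  rewrite H. replace (2 * PI * (INR k / 2))%R with (INR k * (2 * PI * (1 / 2)))%R by field.
  rewrite RtoC_mult. ring.
Qed.

Lemma qpow_nat_half (n : nat) (t : C) : qpow (INR n) t = qpow (1 / 2) t ^ (2 * n).
Proof. rewrite <- (Cmult_1_l t) at 1. apply qpow_scale. rewrite mult_INR. simpl. field. Qed.

Lemma cprod_prodC (f : nat -> C) M : cprod f M = prodC (fun i => f (S i)) M.
Proof. induction M as [|M IH]; simpl; [reflexivity | rewrite IH; reflexivity]. Qed.

Lemma Cmod_qpow_half (t : C) : Cmod (qpow (1 / 2) t) = exp (- PI * Im t).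
Proof. unfold qpow. rewrite Cmod_cexp. destruct t as [t1 t2]. simpl. f_equal. field. Qed.

Lemma kron8_values n : kron8 n = 0%Z \/ kron8 n = 1%Z \/ kron8 n = (-1)%Z.
Proof. unfold kron8. destruct (n mod 8)%nat as [|[|[|[|[|[|[|[|m]]]]]]]]; auto. Qed.

Lemma kron8_periodic j r : kron8 (8 * j + r) = kron8 r.
Proof.
  unfold kron8. replace (8 * j + r)%nat with (r + j * 8)%nat by lia.
  rewrite Nat.Div0.mod_add. reflexivity.
Qed.

Lemma zpowC_sub_1_bound (c : C) (k : Z) (s : R) : (Cmod c <= s < 1)%R ->
  (k = 0 \/ k = 1 \/ k = -1)%Z -> (Cmod (zpowC (1 - c) k - 1) <= Cmod c / (1 - s))%R.
Proof.
  intros Hs Hk. pose proof (Cmod_ge_0 c) as Hc0.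
  assert (H1c : (1 - s <= Cmod (1 - c))%R).
  { pose proof (Cmod_one_minus_ge c). lra. }
  assert (Hdiv : (Cmod c <= Cmod c / (1 - s))%R).
  { apply Rle_div_r; [lra|]. nra. }
  destruct Hk as [-> | [-> | ->]]; simpl; rewrite ?Cmult_1_r.
  - replace (RtoC 1 - 1) with (RtoC 0) by ring. rewrite Cmod_0. apply Rdiv_le_0_compat; lra.
  - replace (1 - c - 1) with (- c) by ring. rewrite Cmod_opp. exact Hdiv.
  - assert (Hnz : 1 - c <> 0) by (intros E; rewrite E, Cmod_0 in H1c; lra).
    replace (/ (1 - c) - 1) with (c / (1 - c)) by (field; exact Hnz).
    rewrite Cmod_div by exact Hnz. unfold Rdiv. apply Rmult_le_compat_l; [exact Hc0|].
    apply Rinv_le_contravar; lra.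
Qed.

Lemma zpowC_lower_bound (c : C) (k : Z) (s : R) : (Cmod c <= s < 1)%R ->
  (k = 0 \/ k = 1 \/ k = -1)%Z -> ((1 - s) / 2 <= Cmod (zpowC (1 - c) k))%R.
Proof.
  intros Hs Hk. pose proof (Cmod_ge_0 c) as Hc0.
  assert (H1c : (1 - s <= Cmod (1 - c))%R).
  { pose proof (Cmod_one_minus_ge c). lra. }
  destruct Hk as [-> | [-> | ->]]; simpl; rewrite ?Cmult_1_r.
  - rewrite Cmod_1. lra.
  - lra.
  - assert (Hup : (Cmod (1 - c) <= 2)%R).
    { pose proof (Cmod_triangle 1 (- c)) as T. rewrite Cmod_1, Cmod_opp in T.
      change (1 + - c) with (1 - c) in T. lra. }
    rewrite Cmod_inv by (intros E; rewrite E, Cmod_0 in H1c; lra).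
    apply Rle_trans with (/ 2)%R; [lra|]. apply Rinv_le_contravar; lra.
Qed.

Section WeberIdentity.
Variable tau : C.
Hypothesis Htau : (0 < Im tau)%R.

Local Notation x := (qpow (1 / 2) tau).

Lemma Cmod_x_lt_1 : (Cmod x < 1)%R.
Proof.
  rewrite Cmod_qpow_half, <- exp_0. apply exp_increasing.
  pose proof PI_RGT_0. nra.
Qed.

Lemma x_nz : x <> 0.
Proof.
  intros E. pose proof (Cmod_qpow_half tau) as H. rewrite E, Cmod_0 in H.
  pose proof (exp_pos (- PI * Im tau)). lra.
Qed.

Lemma Cmod_x_pow_le k j : (j <= k)%nat -> (Cmod (x ^ k) <= Cmod x ^ j)%R.
Proof.
  intros Hjk. rewrite Cmod_pow. apply pow_le_pow_decr; [|exact Hjk].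
  split; [apply Cmod_ge_0 | left; exact Cmod_x_lt_1].
Qed.

Lemma one_minus_x_pow_nz k : (1 <= k)%nat -> 1 - x ^ k <> 0.
Proof. intros Hk. replace k with (S (k - 1)) by lia. apply one_minus_pow_nz, Cmod_x_lt_1. Qed.

Lemma one_plus_x_pow_nz k : (1 <= k)%nat -> 1 + x ^ k <> 0.
Proof.
  intros Hk E. pose proof (Cmod_one_plus_ge (x ^ k)) as H. rewrite E, Cmod_0 in H.
  replace k with (S (k - 1)) in H by lia. pose proof (Cmod_pow_S_lt_1 x (k - 1) Cmod_x_lt_1). lra.
Qed.

Lemma lim_prod_x_pow (a : nat -> nat) : (forall j, (S j <= a j)%nat) ->
  exists L : C, L <> 0 /\ prodC (fun j => 1 + x ^ a j) --> L.
Proof.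
  intros Ha. apply (lim_prodC_one_plus x _ Cmod_x_lt_1). intros j. apply Cmod_x_pow_le, Ha.
Qed.

Lemma lim_prod_one_minus_x_pow (a : nat -> nat) : (forall j, (S j <= a j)%nat) ->
  exists L : C, L <> 0 /\ prodC (fun j => 1 - x ^ a j) --> L.
Proof.
  intros Ha. apply (lim_prodC_one_plus x (fun j => - x ^ a j) Cmod_x_lt_1).
  intros j. rewrite Cmod_opp. apply Cmod_x_pow_le, Ha.
Qed.

Lemma lim_weber_prod a : (1 <= a)%nat -> exists P : C, P <> 0 /\ weber_prod x a --> P.
Proof. intros Ha. apply lim_prod_x_pow. intros j. lia. Qed.

Lemma lim_prod_16 a b c : (1 <= a)%nat -> (1 <= b)%nat -> (1 <= c)%nat -> exists L : C, L <> 0 /\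
  prodC (fun j => (1 - x ^ (16 * j + a)) * ((1 - x ^ (16 * j + b)) * (1 - x ^ (16 * j + c)))) --> L.
Proof.
  intros Ha Hb Hc.
  destruct (lim_prod_one_minus_x_pow (fun j => 16 * j + a)%nat) as [La [HLa Hla]]; [intros; lia|].
  destruct (lim_prod_one_minus_x_pow (fun j => 16 * j + b)%nat) as [Lb [HLb Hlb]]; [intros; lia|].
  destruct (lim_prod_one_minus_x_pow (fun j => 16 * j + c)%nat) as [Lc [HLc Hlc]]; [intros; lia|].
  exists (La * (Lb * Lc)). split; [apply Cmult_neq_0; [|apply Cmult_neq_0]; assumption|].
  apply (filterlim_ext (fun N => prodC (fun j => 1 - x ^ (16 * j + a)) N
    * (prodC (fun j => 1 - x ^ (16 * j + b)) N * prodC (fun j => 1 - x ^ (16 * j + c)) N))).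
  - intros N. rewrite <- !prodC_mult. reflexivity.
  - apply lim_mult; [exact Hla | apply lim_mult; assumption].
Qed.

Lemma lim_jacobi_2_14 : exists tA : C, jacobi_2_14 x --> tA.
Proof.
  destruct (lim_prod_16 16 14 2) as [tA [_ HA]]; try lia.
  exists tA. exact (filterlim_ext _ _ (fun N => eq_sym (jacobi_2_14_prod x N x_nz)) HA).
Qed.

Lemma lim_jacobi_6_10 : exists tB : C, tB <> 0 /\ jacobi_6_10 x --> tB.
Proof.
  destruct (lim_prod_16 16 10 6) as [tB [HtB HB]]; try lia.
  exists tB. split; [exact HtB|].
  exact (filterlim_ext _ _ (fun N => eq_sym (jacobi_6_10_prod x N x_nz)) HB).
Qed.

Let v_factor n := zpowC (1 - x ^ (2 * n)) (kron8 n).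

Lemma v_partial_prodC M : v_partial tau M = x * prodC (fun i => v_factor (S i)) M.
Proof.
  unfold v_partial. rewrite cprod_prodC. f_equal.
  apply prodC_ext. intros i _. unfold v_factor. rewrite qpow_nat_half. reflexivity.
Qed.

Lemma lim_v_factors : exists V : C, V <> 0 /\ prodC (fun i => v_factor (S i)) --> V.
Proof.
  pose proof Cmod_x_lt_1 as Hx1. pose proof (Cmod_ge_0 x) as Hx0.
  assert (Hc : forall n, (Cmod (x ^ (2 * S n)) <= Cmod x < 1)%R).
  { intros n. split; [|exact Hx1]. rewrite <- (pow_1 (Cmod x)). apply Cmod_x_pow_le. lia. }
  apply (lim_prodC_nz _ (/ (1 - Cmod x)) (Cmod x) ((1 - Cmod x) / 2)).
  - left. apply Rinv_0_lt_compat. lra.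
  - lra.
  - lra.
  - intros n. eapply Rle_trans; [apply (zpowC_sub_1_bound _ _ _ (Hc n) (kron8_values (S n)))|].
    rewrite Rmult_comm. apply Rmult_le_compat_r; [left; apply Rinv_0_lt_compat; lra|].
    apply Cmod_x_pow_le. lia.
  - intros n. apply (zpowC_lower_bound _ _ _ (Hc n) (kron8_values (S n))).
Qed.

Lemma lim_v_partial : exists v : C, v <> 0 /\ v_partial tau --> v.
Proof.
  destruct lim_v_factors as [V [HV HlimV]].
  exists (x * V). split; [apply Cmult_neq_0; [exact x_nz | exact HV]|].
  apply (filterlim_ext _ _ (fun M => eq_sym (v_partial_prodC M))). apply lim_scal, HlimV.
Qed.

(* Eight consecutive factors of [v] against one factor of [jacobi_6_10 x]; the Kronecker
   symbol makes the exponents [2, 14] appear upstairs and [6, 10] downstairs. *)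
Lemma v_factor_block j :
  prodC (fun r => v_factor (S (8 * j + r))) 8
    * ((1 - x ^ (16 * j + 16)) * ((1 - x ^ (16 * j + 10)) * (1 - x ^ (16 * j + 6))))
  = (1 - x ^ (16 * j + 16)) * ((1 - x ^ (16 * j + 14)) * (1 - x ^ (16 * j + 2))).
Proof.
  pose proof (one_minus_x_pow_nz (16 * j + 6) ltac:(lia)) as N6.
  pose proof (one_minus_x_pow_nz (16 * j + 10) ltac:(lia)) as N10.
  assert (Hf : forall r,
    v_factor (S (8 * j + r)) = zpowC (1 - x ^ (16 * j) * x ^ (2 * r + 2)) (kron8 (S r))).
  { intros r. unfold v_factor. rewrite <- Nat.add_succ_r, kron8_periodic, <- Cpow_add_r.
    do 3 f_equal. lia. }
  assert (Hx : forall c, x ^ (16 * j + c) = x ^ (16 * j) * x ^ c) by (intros; apply Cpow_add_r).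
  cbn [prodC]. rewrite !Hf, !Hx. rewrite Hx in N6, N10. set (X := x ^ (16 * j)) in *.
  simpl. simpl in N6, N10. field. split; intros E; [apply N10 | apply N6]; rewrite <- E; ring.
Qed.

Lemma v_partial_8N N : v_partial tau (8 * N) * jacobi_6_10 x N = x * jacobi_2_14 x N.
Proof.
  rewrite v_partial_prodC, prodC_blocks, jacobi_6_10_prod, jacobi_2_14_prod by exact x_nz.
  rewrite <- Cmult_assoc, <- prodC_mult. f_equal. apply prodC_ext. intros j _. apply v_factor_block.
Qed.

Lemma v_limit_ratio (v tA tB : C) :
  v_partial tau --> v -> jacobi_2_14 x --> tA -> jacobi_6_10 x --> tB -> v * tB = x * tA.
Proof.
  intros Hv HA HB. apply (lim_unique (fun N => v_partial tau (8 * N) * jacobi_6_10 x N)).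
  - apply lim_mult; [|exact HB].
    apply lim_subseq; [apply (filterlim_eventually_of_ge _ 0); lia | exact Hv].
  - apply (filterlim_ext _ _ (fun N => eq_sym (v_partial_8N N))). apply lim_scal, HA.
Qed.

Lemma p_partial_prodC N : p_partial (RtoC 8 * tau) N =
  2 * x * prodC (fun i => ((1 + x ^ (8 * i + 8)) / (1 + x ^ (8 * i + 4))) ^ 2) N.
Proof.
  unfold p_partial. rewrite cprod_prodC, (qpow_scale _ _ 1) by (simpl; field).
  rewrite Cpow_1_r. f_equal. apply prodC_ext. intros i _.
  rewrite (qpow_scale _ _ (8 * i + 8)), (qpow_scale _ _ (8 * i + 4));
    [reflexivity | rewrite plus_INR, mult_INR, S_INR; simpl; field ..].
Qed.

Lemma p_partial_weber N : p_partial (RtoC 8 * tau) N * (weber_prod x 4 N * weber_prod x 4 N)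
  = 2 * x * (weber_prod x 8 N * weber_prod x 8 N).
Proof.
  rewrite p_partial_prodC, <- Cmult_assoc. f_equal. unfold weber_prod.
  induction N as [|N IH]; cbn [prodC]; [ring|].
  transitivity (prodC (fun i => ((1 + x ^ (8 * i + 8)) / (1 + x ^ (8 * i + 4))) ^ 2) N
    * (prodC (fun j => 1 + x ^ (8 * j + 4)) N * prodC (fun j => 1 + x ^ (8 * j + 4)) N)
    * (((1 + x ^ (8 * N + 8)) / (1 + x ^ (8 * N + 4))) ^ 2
       * (1 + x ^ (8 * N + 4)) * (1 + x ^ (8 * N + 4))));
    [ring|].
  rewrite IH. simpl. field. apply one_plus_x_pow_nz. lia.
Qed.

Lemma lim_p_partial (P4 P8 : C) : P4 <> 0 -> weber_prod x 4 --> P4 -> weber_prod x 8 --> P8 ->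
  p_partial (RtoC 8 * tau) --> 2 * x * (P8 * P8) / (P4 * P4).
Proof.
  intros HP4 H4 H8.
  apply (filterlim_ext (fun N => 2 * x * (weber_prod x 8 N * weber_prod x 8 N)
    / (weber_prod x 4 N * weber_prod x 4 N))).
  - intros N. rewrite <- p_partial_weber. field.
    apply prodC_nz. intros j. apply one_plus_x_pow_nz. lia.
  - apply lim_div; [apply Cmult_neq_0; exact HP4 | apply lim_scal, lim_mult; exact H8 |].
    apply lim_mult; exact H4.
Qed.

Lemma weber_theta_identity (P4 P8 tA tB : C) : weber_prod x 4 --> P4 -> weber_prod x 8 --> P8 ->
  jacobi_2_14 x --> tA -> jacobi_6_10 x --> tB ->
  P8 * P8 * ((tB + x * tA) * (tB - x * tA)) = P4 * P4 * (tA * tB).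
Proof.
  intros H4 H8 HA HB.
  assert (Hsq : (- x) ^ 2 = x ^ 2) by ring.
  assert (Hplus := theta_dissection x tA tB x_nz Cmod_x_lt_1 HA HB).
  assert (Hminus : jacobi_Ci (- x) --> tB + - x * tA).
  { apply theta_dissection; [apply Copp_nz, x_nz | rewrite Cmod_opp; exact Cmod_x_lt_1 | |];
      rewrite Hsq; assumption. }
  apply (lim_unique (fun N => weber_prod x 8 N * weber_prod x 8 N
    * (jacobi_Ci x (2 * N) * jacobi_Ci (- x) (2 * N)))).
  - replace (tB - x * tA) with (tB + - x * tA) by ring.
    apply lim_mult; [apply lim_mult; exact H8|].
    apply lim_mult; apply lim_subseq; try assumption; apply (filterlim_eventually_of_ge _ 0); lia.
  - apply (filterlim_ext _ _ (fun N => eq_sym (jacobi_Ci_opp_prod x N x_nz))).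
    apply lim_mult; [apply lim_mult; exact H4 | apply lim_mult; assumption].
Qed.

End WeberIdentity.

Lemma modular_identity_of_limits (x v P4 P8 tA tB : C) :
  x <> 0 -> v <> 0 -> P4 <> 0 -> P8 <> 0 -> tB <> 0 -> v * tB = x * tA ->
  P8 * P8 * ((tB + x * tA) * (tB - x * tA)) = P4 * P4 * (tA * tB) ->
  2 / (2 * x * (P8 * P8) / (P4 * P4)) = (1 - v ^ 2) / v.
Proof.
  intros Hx Hv H4 H8 HtB Hratio Htheta.
  assert (HtA : tA = v * tB / x) by (rewrite Hratio; field; exact Hx).
  assert (Hzero : (x * (P8 * P8) * (1 - v ^ 2) - P4 * P4 * v) * (tB * tB) = 0).
  { transitivity (x * (P8 * P8 * ((tB + x * tA) * (tB - x * tA)) - P4 * P4 * (tA * tB)));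
      [rewrite HtA; field; exact Hx | rewrite Htheta; ring]. }
  assert (Hkey : x * (P8 * P8) * (1 - v ^ 2) - P4 * P4 * v = 0).
  { set (D := x * (P8 * P8) * (1 - v ^ 2) - P4 * P4 * v) in *.
    replace D with (D * (tB * tB) / (tB * tB)) by (field; exact HtB).
    rewrite Hzero. field. exact HtB. }
  replace ((1 - v ^ 2) / v) with
    ((x * (P8 * P8) * (1 - v ^ 2) - P4 * P4 * v) / (x * (P8 * P8) * v) + P4 * P4 / (x * (P8 * P8)))
    by (field; repeat split; assumption).
  rewrite Hkey. field. repeat split; assumption.
Qed.

Theorem proposition5 (tau : C) (Htau : 0 < Im tau) :
  exists v p : C,
    filterlim (v_partial tau) eventually (locally v) /\
    filterlim (p_partial (RtoC 8 * tau)%C) eventually (locally p) /\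
    v <> 0%C /\ p <> 0%C /\
    (2 / p = (1 - v ^ 2) / v)%C /\
    ((1 - v ^ 2) / v = 1 / v - v)%C.
Proof.
  pose proof (x_nz tau) as Hx.
  destruct (lim_v_partial tau Htau) as [v [Hv Hlimv]].
  destruct (lim_weber_prod tau Htau 4) as [P4 [HP4 H4]]; [lia|].
  destruct (lim_weber_prod tau Htau 8) as [P8 [HP8 H8]]; [lia|].
  destruct (lim_jacobi_2_14 tau Htau) as [tA HA].
  destruct (lim_jacobi_6_10 tau Htau) as [tB [HtB HB]].
  exists v, (2 * qpow (1 / 2) tau * (P8 * P8) / (P4 * P4)).
  split; [exact Hlimv|]. split; [exact (lim_p_partial tau Htau P4 P8 HP4 H4 H8)|].
  split; [exact Hv|]. split.
  { apply Cdiv_nz; repeat apply Cmult_neq_0; try assumption.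
    intros E. apply RtoC_inj in E. lra. }
  split; [|field; exact Hv].
  apply (modular_identity_of_limits _ _ _ _ tA tB); try assumption.
  - exact (v_limit_ratio tau Htau v tA tB Hlimv HA HB).
  - exact (weber_theta_identity tau Htau P4 P8 tA tB H4 H8 HA HB).
Qed.
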